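(* Let $\Bbbk$ be a field, $R=\Bbbk[x_1,\dots,x_m]$ with the standard $\mathbb Z^m$-grading, $M$ a finitely generated torsion-free $\mathbb Z^m$-graded $R$-module, and $\mathcal F_\bullet$ a minimal $\mathbb Z^m$-graded free resolution of $M$ with differentials $f_n$ (and $f_0\colon F_0\to M$ the augmentation). Let $B$ be a homogeneous basis of $\mathcal F_\bullet$ with minimal support. If $n\ge1$ and $y\in F_n$ is a homogeneous element with $\operatorname{supp}f_n(y)=\operatorname{supp}f_n(b)$ for some $b\in B_n$, then there is a nonzero homogeneous $a\in R$ with $a f_n(b)=f_n(y)$. In particular, any two distinct elements of $B_n$ ($n\ge1$) have non-comparable (with respect to inclusion) boundary supports.
   Context: For a complex of free modules $\mathcal F_\bullet$ with differentials $f_n$, $f_0\colon F_0\to H_0(\mathcal F_\bullet)$ the canonical projection, and bases $B_n$ of $F_n$, $B=\coprod B_n$: the support of $y=\sum_{c\in B_n}a_cc$ is $\{c\in B_n:a_c\ne0\}$; $y$ is a cycle with minimal support if $y\in\operatorname{Ker}f_n$ and $\operatorname{supp}y$ does not properly contain the support of any nonzero element of $\operatorname{Ker}f_n$; the boundary support of $y\in F_n$ ($n\ge1$) is $\operatorname{supp}f_n(y)$; $B$ is a basis with minimal support if $f_n(b)$ is a cycle with minimal support for all $n\ge1$, $b\in B_n$. A $\mathbb Z^m$-graded free resolution is minimal if its differentials are homogeneous of degree $0$ and $f_n(F_n)\subseteq(x_1,\dots,x_m)F_{n-1}$ for $n\ge1$. *)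

From HB Require Import structures.
From mathcomp Require Import all_boot all_order all_algebra.
From mathcomp Require Export mpoly.
Set Implicit Arguments. Unset Strict Implicit. Unset Printing Implicit Defensive.
Import GRing.Theory.
Local Open Scope ring_scope.

(* R = {mpoly K[m]} (standard Z^m-grading: the monomial with
   exponent vector e has degree e).  The free module F_n has a finite homogeneous
   basis B_n indexed by 'I_(r n); elements of F_n are row vectors 'rV_(r n)
   (coordinates in B_n) and the degree of the basis element i of F_n is
   deg n i : Z^m (a function 'I_m -> int).  The differential f_{k+1} : F_{k+1} -> F_k
   is right multiplication by D k : 'M_(r k.+1, r k), so f_{k+1}(b) = row b (D k). *)

Section Defs.
Variables (K : fieldType) (m : nat).
Local Notation R := {mpoly K[m]}.

Definition homog_of (p : R) (e : 'I_m -> int) : Prop :=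
  forall mon : 'X_{1..m}, mon \in msupp p -> forall j : 'I_m, (mon j)%:Z = e j.

Definition homog_poly (p : R) : Prop := exists e, homog_of p e.

Definition homog_elt (n : nat) (dg : 'I_n -> 'I_m -> int) (y : 'rV[R]_n) : Prop :=
  exists e : 'I_m -> int, forall i, homog_of (y 0 i) (fun j => e j - dg i j).

Definition supp (n : nat) (y : 'rV[R]_n) : {set 'I_n} := [set i | y 0 i != 0].

Variables (r : nat -> nat) (D : forall k, 'M[R]_(r k.+1, r k)).

(* Ker f_k, where f_0 : F_0 -> M = H_0 = coker f_1 is the canonical projection *)
Definition ker_f (k : nat) : 'rV[R]_(r k) -> Prop :=
  match k return 'rV[R]_(r k) -> Prop with
  | 0 => fun v => exists z : 'rV[R]_(r 1), v = z *m D 0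
  | k'.+1 => fun v => v *m D k' = 0
  end.

Definition is_complex : Prop := forall k, D k.+1 *m D k = 0.

Definition exact_pos : Prop :=
  forall k (v : 'rV[R]_(r k.+1)), @ker_f k.+1 v -> exists z, v = z *m D k.+1.

Definition graded_diff (deg : forall k, 'I_(r k) -> 'I_m -> int) : Prop :=
  forall k i j, homog_of (D k i j) (fun l => deg k.+1 i l - deg k j l).

(* minimality: f_n(F_n) inside (x_1..x_m) F_{n-1}, i.e. no constant terms *)
Definition minimal_diff : Prop := forall k i j, (D k i j)@_0%MM = 0.

(* M = coker f_1 = F_0 / im f_1 is torsion-free *)
Definition torsion_free_coker : Prop :=
  forall (a : R) (v : 'rV[R]_(r 0)), a != 0 ->
    (exists z, a *: v = z *m D 0) -> exists z, v = z *m D 0.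

Definition min_support_cycle (k : nat) (y : 'rV[R]_(r k)) : Prop :=
  @ker_f k y /\ forall w, @ker_f k w -> w != 0 -> ~ (supp w \proper supp y).

Definition basis_min_support : Prop :=
  forall k (b : 'I_(r k.+1)), @min_support_cycle k (row b (D k)).

End Defs.

(* Let [g = f(b)] and [h = f(y)] have the same support and pick [c] in it.
   Then [g_c h - h_c g] is a cycle supported strictly inside [supp g], so it
   vanishes by minimality of [supp g].  For the fine Z^m-grading a homogeneous
   polynomial is a scalar times a monomial, so [h_c / g_c] is a homogeneous
   polynomial as soon as [deg b <= deg y] componentwise.  If this failed at a
   variable [x_l], then [x_l] would divide every coordinate of [f(b)]; writing
   [f(b) = x_l f(z)] (exactness, or torsion-freeness of [M] in degree 1), the
   cycle [e_b - x_l z] would lie in [Im f_{n+1}], which has no constant terms by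
   minimality, although its [b]-coordinate has constant term 1.  For the second
   claim, an inclusion between supports of basis boundaries is an equality by
   minimality of support, so [f(b') = a f(b)] and [e_b' - a e_b] is again a
   cycle with constant term 1 in a coordinate. *)

From HB Require Import structures.
From mathcomp Require Import all_boot all_order all_algebra.
From mathcomp Require Import mpoly.
From mathcomp Require Import zify.
Import Order.TTheory GRing.Theory.
Local Open Scope ring_scope.

Section HomogeneousPolynomials.
Context {K : fieldType} {m : nat}.
Local Notation P := {mpoly K[m]}.
Implicit Types (p q s t : P) (e f : 'I_m -> int).

Lemma homog_mlead {p e} : homog_of p e -> p != 0 -> forall j, (mlead p j)%:Z = e j.
Proof. by move=> hp /mlead_supp; apply: hp. Qed.

Lemma homog_msupp_eq {p e mo mo'} :
  homog_of p e -> mo \in msupp p -> mo' \in msupp p -> mo = mo'.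
Proof.
by move=> hp hmo hmo'; apply/mnmP => j; apply/eqP; rewrite -eqz_nat hp ?hp.
Qed.

Lemma homog_termE {p e} : homog_of p e -> p = mleadc p *: 'X_[mlead p].
Proof.
move=> hp; have [->|pnz] := eqVneq p 0; first by rewrite mcoeff0 scale0r.
apply/mpolyP => mo; rewrite mcoeffZ mcoeffX.
have [<-|ne] := eqVneq (mlead p) mo; first by rewrite mulr1.
rewrite mulr0; apply/eqP; rewrite -[_ == 0]negbK -mcoeff_msupp; apply/negP => hmo.
by case/eqP: ne; apply: homog_msupp_eq hp (mlead_supp pnz) hmo.
Qed.

Lemma homog0 e : homog_of (0 : P) e.
Proof. by move=> mo; rewrite msupp0. Qed.

Lemma homogX mo : homog_of ('X_[mo] : P) (fun j => (mo j)%:Z).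
Proof. by move=> x; rewrite msuppX mem_seq1 => /eqP ->. Qed.

Lemma homogZ (c : K) {p e} : homog_of p e -> homog_of (c *: p) e.
Proof. by move=> hp x /msuppZ_le; apply: hp. Qed.

Lemma homogD {p q e} : homog_of p e -> homog_of q e -> homog_of (p + q) e.
Proof.
by move=> hp hq mo /msuppD_le; rewrite mem_cat => /orP [] h j; [apply: hp | apply: hq].
Qed.

Lemma homog_sum I (r : seq I) (F : I -> P) e :
  (forall i, homog_of (F i) e) -> homog_of (\sum_(i <- r) F i) e.
Proof.
move=> hF; apply: (big_ind (fun x : P => homog_of x e)) => //.
  exact: homog0.
by move=> x y; apply: homogD.
Qed.

Lemma homogM {p q e f} : homog_of p e -> homog_of q f ->
  homog_of (p * q) (fun j => e j + f j).
Proof.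
move=> hp hq mo /msuppM_le /allpairsP [[m1 m2] /= [h1 h2 ->]] j.
by rewrite mnmDE PoszD (hp _ h1) (hq _ h2).
Qed.

Lemma homog_ext {p e f} : homog_of p e -> (forall j, e j = f j) -> homog_of p f.
Proof. by move=> hp ef mo hmo j; rewrite -ef hp. Qed.

Definition mterm_div t s : P := (mleadc t / mleadc s) *: 'X_[mlead t - mlead s].

Lemma homog_mterm_div t s : homog_poly (mterm_div t s).
Proof. by eexists; apply/homogZ/homogX. Qed.

(* Homogeneous polynomials are terms, so divisibility is read off the exponents. *)
Lemma homog_dvd {s t e f} : homog_of s e -> homog_of t f -> s != 0 ->
  (t != 0 -> (mlead s <= mlead t)%MM) -> t = mterm_div t s * s.
Proof.
move=> hs ht snz le_st; have [->|tnz] := eqVneq t 0.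
  by rewrite /mterm_div mcoeff0 mul0r scale0r mul0r.
rewrite /mterm_div [X in _ * X](homog_termE hs) -scalerAl -scalerAr scalerA.
by rewrite -mpolyXD submK ?le_st // divfK ?mleadc_eq0 // -(homog_termE ht).
Qed.

End HomogeneousPolynomials.

Section MinimalResolution.
Variables (K : fieldType) (m : nat) (r : nat -> nat).
Variable D : forall k, 'M[{mpoly K[m]}]_(r k.+1, r k).
Variable deg : forall k, 'I_(r k) -> 'I_m -> int.
Hypotheses (cpx : is_complex D) (exactD : exact_pos D) (gradedD : graded_diff D deg)
  (minD : minimal_diff D) (tfD : torsion_free_coker D)
  (minsuppD : basis_min_support D).
Local Notation P := {mpoly K[m]}.

Lemma ker_f_row {k} (b : 'I_(r k.+1)) : ker_f D (row b (D k)).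
Proof. by have [] := minsuppD k b. Qed.

Lemma ker_f_mul {k} (y : 'rV[P]_(r k.+1)) : ker_f D (y *m D k).
Proof. by case: k y => [|k] y /=; [exists y | rewrite -mulmxA cpx mulmx0]. Qed.

Lemma ker_f_lin {k} (s t : P) {v w : 'rV[P]_(r k)} :
  ker_f D v -> ker_f D w -> ker_f D (s *: v - t *: w).
Proof.
case: k v w => [|k] v w /=.
  by move=> [z1 ->] [z2 ->]; exists (s *: z1 - t *: z2); rewrite mulmxBl !scalemxAl.
by move=> hv hw; rewrite mulmxBl -!scalemxAl hv hw !scaler0 subr0.
Qed.

Lemma ker_f_scale_boundary {k} {a : P} {u : 'rV[P]_(r k)} :
  a != 0 -> ker_f D (a *: u) -> exists z, u = z *m D k.
Proof.
case: k u => [|k] u anz /=; first exact: tfD.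
rewrite -scalemxAl => /eqP; rewrite scalemx_eq0 (negbTE anz) => /eqP.
exact: exactD.
Qed.

Lemma kerD_mcoeff0 {k} {v : 'rV[P]_(r k.+1)} i : v *m D k = 0 -> (v 0 i)@_0 = 0.
Proof.
move=> /exactD [z ->]; rewrite mxE rmorph_sum big1 // => j _.
by rewrite rmorphM /= minD mulr0.
Qed.

Lemma preimage_row_mcoeff1 {k} {b : 'I_(r k.+1)} {w} :
  w *m D k = row b (D k) -> (w 0 b)@_0 = 1.
Proof.
move=> hw; have /(kerD_mcoeff0 b) : (w - delta_mx 0 b) *m D k = 0.
  by rewrite mulmxBl -rowE hw subrr.
by rewrite !mxE !eqxx mcoeffB mcoeff1 eqxx => /eqP; rewrite subr_eq0 => /eqP.
Qed.

Lemma row_D_neq0 {k} (b : 'I_(r k.+1)) : row b (D k) != 0.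
Proof.
apply/eqP => g0; have /preimage_row_mcoeff1 : 0 *m D k = row b (D k).
  by rewrite mul0mx g0.
by rewrite mxE mcoeff0 => /eqP; rewrite eq_sym oner_eq0.
Qed.

Lemma row_D_neq_Xmul {k} (b : 'I_(r k.+1)) l (u : 'rV[P]_(r k)) :
  row b (D k) != 'X_l *: u.
Proof.
apply/eqP => gE; have Xnz : ('X_l : P) != 0 by rewrite -msupp_eq0 msuppX.
have kXu : ker_f D ('X_l *: u) by rewrite -gE; apply: ker_f_row.
have [z uE] := ker_f_scale_boundary Xnz kXu.
have /preimage_row_mcoeff1 : ('X_l *: z) *m D k = row b (D k).
  by rewrite -scalemxAl -uE gE.
by rewrite mxE rmorphM /= mcoeffX mnm1_eq0 mul0r => /eqP; rewrite eq_sym oner_eq0.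
Qed.

Lemma min_support_cycle_proportional {k} {g h : 'rV[P]_(r k)} {c} :
  min_support_cycle D g -> ker_f D h -> supp h \subset supp g -> c \in supp g ->
  g 0 c *: h = h 0 c *: g.
Proof.
move=> [kg ming] kh /subsetP shg gc; apply/eqP; rewrite -subr_eq0.
apply/negPn/negP => wnz; apply: (ming _ (ker_f_lin _ _ kh kg) wnz).
rewrite properE; apply/andP; split.
  apply/subsetP => j; rewrite !inE !mxE; apply: contraNneq => gj0.
  have /(contra (shg j)) : j \notin supp g by rewrite inE gj0 eqxx.
  rewrite inE negbK => /eqP hj0.
  by rewrite gj0 hj0 !mulr0 subrr.
by apply/subsetPn; exists c => //; rewrite inE !mxE mulrC subrr eqxx.
Qed.

Lemma homog_mul_D {k} {y : 'rV[P]_(r k.+1)} {e} :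
  (forall i, homog_of (y 0 i) (fun l => e l - deg k.+1 i l)) ->
  forall j, homog_of ((y *m D k) 0 j) (fun l => e l - deg k j l).
Proof.
move=> hy j; rewrite mxE; apply: homog_sum => i.
have /homog_ext := homogM (hy i) (gradedD k i j).
by apply=> l; rewrite addrA subrK.
Qed.

(* Otherwise some [x_l] divides every coordinate of [f(b)]: where these are
   nonzero, so are those of [f(y)], whose degrees in [x_l] are smaller by
   [deg b l - e l > 0] and nonnegative. *)
Lemma supp_eq_deg_le {k} {y : 'rV[P]_(r k.+1)} {b : 'I_(r k.+1)} {e} :
  (forall i, homog_of (y 0 i) (fun l => e l - deg k.+1 i l)) ->
  supp (y *m D k) = supp (row b (D k)) -> forall l, deg k.+1 b l <= e l.
Proof.
move=> hy hsupp l; rewrite leNgt; apply/negP => lt_el.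
set g := row b (D k); apply: (negP (row_D_neq_Xmul b l (\row_j mterm_div (g 0 j) 'X_l))).
apply/eqP/rowP => j; rewrite !mxE mulrC.
apply: (homog_dvd (homogX _) (gradedD k b j)); first by rewrite -msupp_eq0 msuppX.
move=> gj; have hj : (y *m D k) 0 j != 0.
  by have /setP/(_ j) := hsupp; rewrite !inE => ->; rewrite mxE.
rewrite mleadXm lep1mP.
have := homog_mlead (gradedD k b j) gj l; have := homog_mlead (homog_mul_D hy j) hj l.
lia.
Qed.

Lemma boundary_supp_eq_scale {k} {y : 'rV[P]_(r k.+1)} {b : 'I_(r k.+1)} :
  homog_elt (deg k.+1) y -> supp (y *m D k) = supp (row b (D k)) ->
  exists a : P, a != 0 /\ homog_poly a /\ a *: row b (D k) = y *m D k.
Proof.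
move=> [e hy] hsupp; set g := row b (D k); set h := y *m D k.
have [c gc] : exists c, c \in supp g.
  apply/set0Pn; apply: contra (row_D_neq0 b) => /eqP g0.
  by apply/eqP/rowP => j; have /setP/(_ j) := g0; rewrite !inE !mxE => /negbFE/eqP.
have gc0 : g 0 c != 0 by rewrite inE in gc.
have hc0 : h 0 c != 0 by move: gc; rewrite -hsupp inE.
have shg : supp h \subset supp g by rewrite /h hsupp.
have ghE := min_support_cycle_proportional (minsuppD k b) (ker_f_mul y) shg gc.
have hcE : h 0 c = mterm_div (h 0 c) (g 0 c) * g 0 c.
  have hg : homog_of (g 0 c) (fun l => deg k.+1 b l - deg k c l).
    by rewrite mxE; apply: gradedD.
  apply: (homog_dvd hg (homog_mul_D hy c)) => // _.
  apply/mnm_lepP => l; rewrite -lez_nat.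
  have := homog_mlead hg gc0 l; have := homog_mlead (homog_mul_D hy c) hc0 l.
  have := supp_eq_deg_le hy hsupp l; lia.
exists (mterm_div (h 0 c) (g 0 c)); split; last split.
- by apply: contraNneq hc0 => a0; rewrite hcE a0 mul0r.
- exact: homog_mterm_div.
- have : g 0 c *: (mterm_div (h 0 c) (g 0 c) *: g - h) == 0.
    by rewrite scalerBr scalerA mulrC -hcE ghE subrr.
  by rewrite scalemx_eq0 (negbTE gc0) subr_eq0 => /eqP.
Qed.

Lemma boundary_supp_incomparable {k} {b b' : 'I_(r k.+1)} : b != b' ->
  ~ supp (row b (D k)) \subset supp (row b' (D k)).
Proof.
move=> neq_bb' sub.
have eq_supp : supp (row b' (D k)) = supp (row b (D k)).
  apply/esym/eqP; rewrite eqEproper sub /=; apply/negP.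
  by have [_] := minsuppD k b'; apply; [apply: ker_f_row | apply: row_D_neq0].
have hb' : homog_elt (deg k.+1) (delta_mx 0 b' : 'rV[P]_(r k.+1)).
  exists (deg k.+1 b') => i; rewrite mxE /=.
  have [->|_] := eqVneq i b'; last exact: homog0.
  by move=> mo; rewrite msupp1 mem_seq1 => /eqP -> j; rewrite mnm0E subrr.
have hs : supp (delta_mx 0 b' *m D k) = supp (row b (D k)) by rewrite -rowE.
have [a [_ [_ aE]]] := boundary_supp_eq_scale hb' hs.
have /preimage_row_mcoeff1 : (a *: delta_mx 0 b) *m D k = row b' (D k).
  by rewrite -scalemxAl -rowE aE -rowE.
by rewrite !mxE eqxx eq_sym (negbTE neq_bb') mulr0 mcoeff0 => /eqP; rewrite eq_sym oner_eq0.
Qed.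

End MinimalResolution.

Theorem mainTheorem5 (K : fieldType) (m : nat) (r : nat -> nat)
  (D : forall k, 'M[{mpoly K[m]}]_(r k.+1, r k))
  (deg : forall k, 'I_(r k) -> 'I_m -> int) :
  is_complex D -> exact_pos D -> graded_diff D deg -> minimal_diff D ->
  torsion_free_coker D -> basis_min_support D ->
  (forall (k : nat) (y : 'rV[{mpoly K[m]}]_(r k.+1)) (b : 'I_(r k.+1)),
      homog_elt (deg k.+1) y ->
      supp (y *m D k) = supp (row b (D k)) ->
      exists a : {mpoly K[m]},
        a != 0 /\ homog_poly a /\ a *: row b (D k) = y *m D k)
  /\
  (forall (k : nat) (b b' : 'I_(r k.+1)), b != b' ->
      ~ (supp (row b (D k)) \subset supp (row b' (D k)))).
Proof.
move=> cpx exactD gradedD minD tfD minsuppD; split=> k.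
  by move=> y b; apply: boundary_supp_eq_scale.
by move=> b b'; apply: boundary_supp_incomparable.
Qed.
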